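(* Let $\phi$ be a proper partial $q$-edge-coloring of a graph $G$, let $xy$ be an uncolored edge, $C\subseteq[q]$, and $\ell\in\mathbb{N}$. Run $\mathsf{VizingChain}(\phi,xy,x,C,\ell)$ and suppose it returns $((F,P),\alpha)$ (not $\mathsf{FAIL}$), where $F=(x,y_0=y,\dots,y_{k-1})$ and $P=(x_0=x,\dots,x_s)$ is an $\alpha\beta$-path. If $s\ge1$, let $j$ be such that $y_j=x_1$. Then one of the following holds: (1) $P=(x)$ and the edge $xy_{k-1}$ is $\psi$-happy, where $\psi$ is obtained from $\phi$ by shifting $F$; or (2) $\mathsf{length}(P)<\ell$ and the edge $xy_{j-1}$ is $\psi$-happy, where $\psi$ is obtained from $\phi$ by flipping $P$ and then shifting $F'=(x,y_0,\dots,y_{j-1})$; or (3) $\mathsf{length}(P)<\ell$ and the edge $xy_{k-1}$ is $\psi$-happy, where $\psi$ is obtained from $\phi$ by flipping $P$ and then shifting $F$; or (4) $\mathsf{length}(P)=\ell$. Moreover, in cases (1)–(3) the happy edge may be colored with $\alpha$ (i.e. $\alpha$ is missing at both its endpoints under $\psi$).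
   Context: Let $G=(V,E)$ be a simple graph and $q\in\mathbb{N}$. A partial $q$-edge-coloring is a map $\phi:E\to[q]\cup\{\mathsf{blank}\}$ ($\mathsf{blank}$ = uncolored); it is proper if any two distinct colored edges sharing an endpoint get different colors. For $x\in V$, $M(\phi,x):=[q]\setminus\{\phi(xy): y\in N_G(x)\}$ is the set of colors missing at $x$. An uncolored edge $xy$ is $\phi$-happy if $M(\phi,x)\cap M(\phi,y)\ne\varnothing$. A fan under $\phi$ is a sequence $F=(x,y_0,\dots,y_{k-1})$ of distinct neighbors $y_i$ of $x$ with $\phi(xy_0)=\mathsf{blank}$ and $\phi(xy_i)\in M(\phi,y_{i-1})$ for $1\le i<k$; $\mathsf{length}(F)=k$. Shifting $F$ produces the coloring $\psi$ with $\psi(xy_i)=\phi(xy_{i+1})$ for $0\le i<k-1$, $\psi(xy_{k-1})=\mathsf{blank}$, and $\psi=\phi$ elsewhere. For $\alpha,\beta\in[q]$, an $\alpha\beta$-path under $\phi$ is a sequence $P=(x_0,\dots,x_s)$ of distinct vertices with $\phi(x_0x_1)=\alpha$ and the colors of $x_ix_{i+1}$ alternating $\alpha,\beta,\alpha,\dots$; $\mathsf{length}(P)=s$, $\mathsf{vEnd}(P)=x_s$. The path $(x_0)$ has length $0$. It is maximal if it cannot be extended at either end. Flipping $P$ interchanges the colors $\alpha$ and $\beta$ on the edges of $P$. Procedure $\mathsf{MakeFan}(\phi,xy,x,C)$: set $F\gets(x,y)$, $z\gets y$, $k\gets 1$ (and write $y_0=y$). Repeat: if $C\cap M(\phi,z)=\varnothing$,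 return $\mathsf{FAIL}$. Let $\eta\gets\min (M(\phi,z)\cap C)$. Set $z\gets$ the neighbor $w$ of $x$ with $\phi(xw)=\eta$, or $z\gets\mathsf{blank}$ if no such $w$ exists. If $z=\mathsf{blank}$, return $(F,\eta,k)$. If $z=y_j$ for some vertex $y_j$ of $F$ other than $x$, return $(F,\eta,j)$. Otherwise set $y_k\gets z$, append $y_k$ to $F$, and $k\gets k+1$. Procedure $\mathsf{VizingChain}(\phi,xy,x,C,\ell)$: run $\mathsf{MakeFan}(\phi,xy,x,C)$; if it returns $\mathsf{FAIL}$, return $\mathsf{FAIL}$. Otherwise let $(F,\alpha,j)$ be its output. If $j=\mathsf{length}(F)$, return $((F,(x)),\alpha)$. If $M(\phi,x)\cap C=\varnothing$, return $\mathsf{FAIL}$. Otherwise let $\beta\gets\min(M(\phi,x)\cap C)$, let $P$ be the maximal $\alpha\beta$-path starting at $x$ if its length is at most $\ell$, and otherwise the initial segment of it consisting of its first $\ell$ edges; return $((F,P),\alpha)$. *)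

From mathcomp Require Import all_boot.
Set Implicit Arguments. Unset Strict Implicit. Unset Printing Implicit Defensive.

(* A partial q-edge-coloring: phi : T -> T -> option nat, read only on edges
   (phi u v for e u v), None = blank, colors are 1..q. *)
Section Vizing.
Variables (T : finType) (q : nat) (e : rel T).

Definition simple_graph := symmetric e /\ irreflexive e.

Definition coloring := T -> T -> option nat.

Definition partial_coloring (phi : coloring) :=
  (forall u v, phi u v = phi v u) /\
  (forall u v c, e u v -> phi u v = Some c -> 0 < c <= q).

Definition proper_coloring (phi : coloring) :=
  partial_coloring phi /\
  forall u v w, e u v -> e u w -> v != w -> phi u v != None -> phi u v != phi u w.

Definition missing (phi : coloring) (v : T) : pred nat :=
  [pred c | (0 < c <= q) && [forall w, ~~ (e v w && (phi v w == Some c))]].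

Definition happy (phi : coloring) (u v : T) : bool :=
  [&& e u v, phi u v == None &
      has (fun c => (c \in missing phi u) && (c \in missing phi v)) (iota 1 q)].

(* minimum of a set of colors P (only used when P meets [q]) *)
Definition minc (P : pred nat) : nat := nth 0 [seq c <- iota 1 q | P c] 0.

(* Fans are represented by x together with the sequence ys = [y_0; ...; y_{k-1}]. *)
Definition shift_fan (phi : coloring) (x : T) (ys : seq T) : coloring :=
  fun u v =>
    let g b := let i := index b ys in
               if i < (size ys).-1 then phi x (nth x ys i.+1)
               else if i < size ys then None else phi u v in
    if u == x then g v else if v == x then g u else phi u v.

Definition path_edge (P : seq T) (u v : T) : bool :=
  has (fun i => ((nth u P i, nth u P i.+1) == (u, v)) ||
                ((nth u P i, nth u P i.+1) == (v, u))) (iota 0 (size P).-1).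

Definition swap_col (a b : nat) (o : option nat) : option nat :=
  match o with
  | Some c => if c == a then Some b else if c == b then Some a else Some c
  | None => None
  end.

Definition flip_path (phi : coloring) (P : seq T) (a b : nat) : coloring :=
  fun u v => if path_edge P u v then swap_col a b (phi u v) else phi u v.

Definition ab_path (phi : coloring) (a b : nat) (P : seq T) : Prop :=
  match P with
  | [::] => False
  | x0 :: _ =>
    uniq P /\
    forall i, i < (size P).-1 ->
      e (nth x0 P i) (nth x0 P i.+1) /\
      phi (nth x0 P i) (nth x0 P i.+1) = Some (if odd i then b else a)
  end.

Definition path_length (P : seq T) : nat := (size P).-1.

Definition maximal_ab_path (phi : coloring) (a b : nat) (P : seq T) : Prop :=
  ab_path phi a b P /\
  (forall x0, ~ (exists w, w \notin P /\ e (last x0 P) w /\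
        phi (last x0 P) w = Some (if odd (path_length P) then b else a))) /\
  (forall x0, ~ (exists w, w \notin P /\ e w (head x0 P) /\ phi w (head x0 P) = Some b)).

(* MakeFan: returns None for FAIL, Some (ys, eta, j) otherwise.
   The fuel #|T|.+1 is never exhausted (each non-returning iteration appends a
   new distinct neighbour of x). *)
Fixpoint mf_loop (phi : coloring) (x : T) (C : pred nat) (fuel : nat)
    (ys : seq T) (z : T) : option (seq T * nat * nat) :=
  match fuel with
  | 0 => None
  | n.+1 =>
    let P := [pred c | (c \in missing phi z) && (c \in C)] in
    if ~~ has P (iota 1 q) then None else
    let eta := minc P in
    match [pick w | e x w && (phi x w == Some eta)] with
    | None => Some (ys, eta, size ys)
    | Some w => if w \in ys then Some (ys, eta, index w ys)
                else mf_loop phi x C n (rcons ys w) w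
    end
  end.

Definition make_fan (phi : coloring) (x y : T) (C : pred nat) :=
  mf_loop phi x C #|T|.+1 [:: y] y.

(* VizingChain(phi, xy, x, C, l) returns ((F, P), alpha), F = (x, ys). *)
Definition vizing_chain_returns (phi : coloring) (x y : T) (C : pred nat)
    (l : nat) (ys : seq T) (P : seq T) (alpha : nat) : Prop :=
  exists j, make_fan phi x y C = Some (ys, alpha, j) /\
    (if j == size ys then P = [:: x]
     else let PC := [pred c | (c \in missing phi x) && (c \in C)] in
          has PC (iota 1 q) /\
          let beta := minc PC in
          exists Pmax, head x Pmax = x /\ maximal_ab_path phi alpha beta Pmax /\
            P = (if path_length Pmax <= l then Pmax else take l.+1 Pmax)).

End Vizing.

Arguments minc q P : clear implicits.
Arguments missing T q e phi v : clear implicits.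
Arguments happy T q e phi u v : clear implicits.
Arguments vizing_chain_returns T q e phi x y C l ys P alpha : clear implicits.
Arguments proper_coloring T q e phi : clear implicits.
Arguments simple_graph T e : clear implicits.
Arguments shift_fan T phi x ys _ _ : clear implicits.
Arguments flip_path T phi P a b _ _ : clear implicits.
Arguments path_length T P : clear implicits.

From mathcomp Require Import all_boot.
Set Implicit Arguments. Unset Strict Implicit. Unset Printing Implicit Defensive.

(* MakeFan yields a fan y_0 .. y_(k-1) at x whose last vertex misses alpha.  If
   alpha is also missing at x, shifting the whole fan frees alpha at both ends of
   x y_(k-1).  Otherwise alpha sits on x y_j, beta is missing at x, and the
   alpha-beta path P from x starts with the edge x y_j; a truncated P has length l.
   Flipping P makes alpha missing at x and keeps it missing at every vertex off P,
   while y_(j-1) and y_(k-1), both missing alpha, can only meet P at its far end.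
   They are distinct, so one of them is not that end, and shifting the fan that
   ends there makes its last edge happy with alpha. *)

Lemma minc_sat q (P : pred nat) : has P (iota 1 q) -> P (minc q P).
Proof.
move=> hasP; have: minc q P \in [seq c <- iota 1 q | P c].
  by apply: mem_nth; rewrite lt0n size_eq0 -has_filter.
by rewrite mem_filter => /andP[].
Qed.

Lemma index_last_uniq (S : eqType) (x0 : S) (s : seq S) :
  s != [::] -> uniq s -> index (last x0 s) s = (size s).-1.
Proof.
by case: s => // y s _ /(@index_uniq _ x0 _ (y :: s) (leqnn _)); rewrite nth_last.
Qed.

Lemma mem_last_ne (S : eqType) (x0 : S) (s : seq S) : s != [::] -> last x0 s \in s.
Proof. by case: s => // y s _ /=; apply: mem_last. Qed.

Lemma last_take (S : Type) (x0 : S) (s : seq S) j :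
  0 < j <= size s -> last x0 (take j s) = nth x0 s j.-1.
Proof.
by case/andP=> j_gt0 j_le; rewrite -nth_last size_takel // nth_take // prednK.
Qed.

Section VizingChain.
Variables (T : finType) (q : nat) (e : rel T).
Hypotheses (e_sym : symmetric e) (e_irr : irreflexive e).
Implicit Types (phi psi : coloring T) (x u v w : T) (ys P : seq T).

Local Notation M := (missing T q e).

Definition happy_with psi a u v :=
  [/\ happy T q e psi u v, a \in M psi u & a \in M psi v].

Lemma missingP psi v c :
  reflect (0 < c <= q /\ forall w, e v w -> psi v w <> Some c) (c \in M psi v).
Proof.
rewrite inE; apply: (iffP andP) => -[-> h]; split=> //.
  by move=> w evw pw; move/forallP: h => /(_ w); rewrite evw pw eqxx.
by apply/forallP => w; apply/negP => /andP[evw /eqP]; apply: h.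
Qed.

Lemma edge_neq u v : e u v -> v != u.
Proof. by apply: contraTneq => ->; rewrite e_irr. Qed.

Lemma proper_coloring_inj phi u v w c :
  proper_coloring T q e phi -> e u v -> e u w ->
  phi u v = Some c -> phi u w = Some c -> v = w.
Proof.
move=> [_ pr] euv euw pv pw; apply/eqP; apply: contraTT isT => vw.
by move: (pr _ _ _ euv euw vw); rewrite pv pw eqxx => /(_ isT).
Qed.

Lemma missing_shift_fan_center psi x ys a :
  all (e x) ys -> a \in M psi x -> a \in M (shift_fan T psi x ys) x.
Proof.
move=> /allP ys_adj /missingP[a_range ax]; apply/missingP; split=> // w exw.
rewrite /shift_fan eqxx; case: ifP => [i_lt | _]; last by case: ifP => // _; apply: ax.
by apply/ax/ys_adj/mem_nth; rewrite -ltn_predRL.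
Qed.

Lemma missing_shift_fan_last psi x ys a :
  uniq ys -> all (e x) ys -> ys != [::] ->
  a \in M psi (last x ys) -> a \in M (shift_fan T psi x ys) (last x ys).
Proof.
move=> ys_uniq ys_adj ys_ne.
have yx : last x ys != x by apply/edge_neq/(allP ys_adj)/mem_last_ne.
move=> /missingP[a_range ay]; apply/missingP; split=> // w eyw.
rewrite /shift_fan (negbTE yx); case: ifP => _; last exact: ay.
by rewrite index_last_uniq // ltnn ltn_predL lt0n size_eq0 ys_ne.
Qed.

Lemma happy_shift_fan psi x ys a :
  uniq ys -> all (e x) ys -> ys != [::] ->
  a \in M psi x -> a \in M psi (last x ys) ->
  happy_with (shift_fan T psi x ys) a x (last x ys).
Proof.
move=> ys_uniq ys_adj ys_ne ax ay.
have ax' := missing_shift_fan_center ys_adj ax.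
have ay' := missing_shift_fan_last ys_uniq ys_adj ys_ne ay.
split=> //; apply/and3P; split.
- exact/(allP ys_adj)/mem_last_ne.
- by rewrite /shift_fan eqxx index_last_uniq // ltnn ltn_predL lt0n size_eq0 ys_ne.
- apply/hasP; exists a; last by rewrite ax' ay'.
  by case/missingP: ax => /andP[a_gt0 a_le] _; rewrite mem_iota a_gt0 add1n ltnS.
Qed.

Lemma path_edge_mem P u v : path_edge P u v -> u \in P.
Proof.
case/hasP => i; rewrite mem_iota add0n => /andP[_ i_lt].
have i1_lt : i.+1 < size P by rewrite -ltn_predRL.
have i_lt' : i < size P by apply: ltnW.
by case/orP => /eqP[] => [<- _ | _ <-]; apply: mem_nth.
Qed.

Lemma missing_flip_notin psi P a b v c :
  v \notin P -> c \in M psi v -> c \in M (flip_path T psi P a b) v.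
Proof.
move=> vP /missingP[c_range cv]; apply/missingP; split=> // w evw.
rewrite /flip_path; case: ifP => [/path_edge_mem | _]; last exact: cv.
by rewrite (negbTE vP).
Qed.

Lemma ab_path_avoids_missing psi a b x0 P' v :
  (forall u w, psi u w = psi w u) -> ab_path e psi a b (x0 :: P') ->
  v != x0 -> v != last x0 P' -> a \in M psi v -> v \notin x0 :: P'.
Proof.
move=> psym [_ abP] vx vl /missingP[_ av]; apply/negP => vP.
set P := x0 :: P' in abP vP.
have := nth_index x0 vP; set i := index v P => nv.
have i_gt0 : 0 < i by rewrite lt0n; apply: contra_neq vx => i0; rewrite -nv i0.
have i_lt : i < (size P).-1.
  rewrite ltn_neqAle -ltnS prednK // index_mem vP andbT.
  by apply: contra_neq vl => iE; rewrite -nv iE nth_last.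
case: (boolP (odd i)) => [i_odd | i_even].
- have [ee pe] := abP i.-1 (leq_ltn_trans (leq_pred i) i_lt).
  move: ee pe; rewrite prednK // nv -[in odd _](prednK i_gt0) /= in i_odd *.
  by rewrite (negbTE i_odd) psym e_sym; apply: av.
- by have [] := abP i i_lt; rewrite nv (negbTE i_even); apply: av.
Qed.

Lemma missing_flip_head psi a b x P' :
  proper_coloring T q e psi -> ab_path e psi a b (x :: P') -> P' != [::] ->
  b \in M psi x -> a != b -> a \in M (flip_path T psi (x :: P') a b) x.
Proof.
move=> pr [_ abP] P'_ne /missingP[_ bx] ab.
have [ex1 px1] : e x (nth x P' 0) /\ psi x (nth x P' 0) = Some a.
  by apply: (abP 0); rewrite lt0n size_eq0.
have a_range : 0 < a <= q by case: pr => -[_ range] _; apply: range ex1 px1.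
apply/missingP; split=> // w exw; rewrite /flip_path; case: ifP => [_ | x1_off pw].
  case pw: (psi x w) => [c|] //=.
  case: eqP => [_ [/eqP] | ca]; first by rewrite eq_sym (negbTE ab).
  case: eqP => [cb | _ [/ca //]].
  by move: (bx w exw); rewrite pw cb.
have x1w := proper_coloring_inj pr ex1 exw px1 pw.
suff : path_edge (x :: P') x w by rewrite x1_off.
by rewrite -x1w; apply/hasP; exists 0; rewrite /= ?eqxx // mem_iota lt0n size_eq0.
Qed.

Lemma maximal_ab_path_start phi a b Pm x w :
  proper_coloring T q e phi -> maximal_ab_path e phi a b Pm -> head x Pm = x ->
  e x w -> phi x w = Some a -> exists2 P', Pm = x :: P' & nth x P' 0 = w.
Proof.
move=> pr [abP [end_max _]] hd exw pxw.
case: Pm abP end_max hd => // x0 P' abP end_max /= x0x; subst x0; exists P' => //.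
case: P' abP end_max => [_ end_max | x1 P' [_ abP] _].
  by case: (end_max x); exists w; rewrite inE (edge_neq exw).
have [ex1 px1] := abP 0 isT.
exact: proper_coloring_inj pr ex1 exw px1 pxw.
Qed.

Definition fan_step phi x : rel T :=
  fun u v => if phi x v is Some c then c \in M phi u else false.

Definition fan phi x ys : Prop :=
  [/\ ys != [::], uniq ys, all (e x) ys, phi x (head x ys) = None
    & sorted (fan_step phi x) ys].

Lemma fan_rcons phi x ys w :
  fan phi x ys -> w \notin ys -> e x w -> fan_step phi x (last x ys) w ->
  fan phi x (rcons ys w).
Proof.
case: ys => [[] // | y0 ys [_ ys_uniq ys_adj hd ys_sorted] wys exw step].
split=> //.
- by rewrite rcons_uniq wys.
- by rewrite all_rcons exw.
- by rewrite /= rcons_path; apply/andP; split.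
Qed.

Lemma fan_color_prev phi x ys j c :
  fan phi x ys -> j < size ys -> phi x (nth x ys j) = Some c ->
  0 < j /\ c \in M phi (nth x ys j.-1).
Proof.
move=> [_ _ _ hd /(sortedP x) ys_sorted] j_lt pj.
have j_gt0 : 0 < j by case: j j_lt pj => // _; rewrite nth0 hd.
split=> //; have := ys_sorted j.-1; rewrite prednK // => /(_ j_lt).
by rewrite /fan_step pj.
Qed.

Lemma mf_loop_spec phi x C n ys z ys' eta j :
  fan phi x ys -> z = last x ys -> mf_loop q e phi x C n ys z = Some (ys', eta, j) ->
  [/\ fan phi x ys', eta \in M phi (last x ys') &
      (j = size ys' /\ eta \in M phi x) \/ (j < size ys' /\ phi x (nth x ys' j) = Some eta)].
Proof.
elim: n ys z => [|n IH] ys z fF -> //=.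
case: ifP => // /negbFE has_eta; have /andP[eta_last _] := minc_sat has_eta.
case: pickP => [w /andP[exw /eqP pw] | no_w].
  case: ifP => [w_in [<- <- <-] | w_out].
    by split=> //; right; rewrite index_mem w_in nth_index.
  apply: IH; last by rewrite last_rcons.
  by apply: fan_rcons; rewrite ?w_out // /fan_step pw.
move=> [<- <- <-]; split=> //; left; split=> //.
apply/missingP; split; first by case/missingP: eta_last.
by move=> w exw pw; move: (no_w w); rewrite exw pw eqxx.
Qed.

Lemma make_fan_spec phi x y C ys eta j :
  e x y -> phi x y = None -> make_fan q e phi x y C = Some (ys, eta, j) ->
  [/\ fan phi x ys, eta \in M phi (last x ys) &
      (j = size ys /\ eta \in M phi x) \/ (j < size ys /\ phi x (nth x ys j) = Some eta)].
Proof. by move=> exy pxy; apply: mf_loop_spec; split; rewrite //= exy. Qed.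

Lemma flip_shift_fan_happy phi x ys P' a b j :
  proper_coloring T q e phi -> fan phi x ys -> a \in M phi (last x ys) ->
  j < size ys -> phi x (nth x ys j) = Some a -> b \in M phi x ->
  ab_path e phi a b (x :: P') -> P' != [::] ->
  happy_with (shift_fan T (flip_path T phi (x :: P') a b) x (take j ys))
             a x (nth x ys j.-1) \/
  happy_with (shift_fan T (flip_path T phi (x :: P') a b) x ys) a x (last x ys).
Proof.
move=> pr fF a_last j_lt pj bx abP P'_ne.
have [ys_ne ys_uniq ys_adj _ _] := fF; have [[psym _] _] := pr.
have [j_gt0 a_prev] := fan_color_prev fF j_lt pj.
have ys_neq_x i : i < size ys -> nth x ys i != x.
  by move=> i_lt; apply/edge_neq/(allP ys_adj)/mem_nth.
have ab : a != b.
  apply: contraTneq bx => <-; apply/negP => /missingP[_ ax].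
  by apply: (ax _ _ pj); apply/(allP ys_adj)/mem_nth.
have a_x := missing_flip_head pr abP P'_ne bx ab.
have j1_lt : j.-1 < size ys by rewrite (leq_ltn_trans (leq_pred j)).
have [yp_end | yp_inner] := eqVneq (nth x ys j.-1) (last x P'); [right | left].
  apply: happy_shift_fan => //; apply: (missing_flip_notin a b _ a_last).
  apply: (ab_path_avoids_missing psym abP _ _ a_last).
    by rewrite -nth_last ys_neq_x // ltn_predL lt0n size_eq0.
  rewrite -yp_end -nth_last nth_uniq // ?ltn_predL ?lt0n ?size_eq0 //.
  by rewrite eq_sym ltn_eqF // -ltnS prednK // (ltn_predK j_lt).
have -> : nth x ys j.-1 = last x (take j ys) by rewrite last_take // j_gt0 (ltnW j_lt).
have take_adj : all (e x) (take j ys).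
  by apply/allP => z /mem_take; apply: (allP ys_adj).
have take_ne : take j ys != [::] by rewrite -size_eq0 size_takel ?(ltnW j_lt) // -lt0n.
have a_take : a \in M (flip_path T phi (x :: P') a b) (last x (take j ys)).
  rewrite last_take ?j_gt0 ?(ltnW j_lt) //; apply: (missing_flip_notin a b _ a_prev).
  exact: (ab_path_avoids_missing psym abP (ys_neq_x _ j1_lt) yp_inner a_prev).
exact: happy_shift_fan (take_uniq _ ys_uniq) take_adj take_ne a_x a_take.
Qed.

End VizingChain.

Theorem lemma3p2 (T : finType) (q : nat) (e : rel T) (phi : coloring T)
    (x y : T) (C : pred nat) (l : nat) (ys P : seq T) (alpha : nat) :
  simple_graph T e ->
  proper_coloring T q e phi ->
  e x y -> phi x y = None ->
  {subset C <= [pred c | 0 < c <= q]} ->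
  vizing_chain_returns T q e phi x y C l ys P alpha ->
  let k := size ys in
  let s := path_length T P in
  let x1 := nth x P 1 in
  let j := index x1 ys in
  let beta := minc q [pred c | (c \in missing T q e phi x) && (c \in C)] in
  let happy_alpha psi u v :=
    [/\ happy T q e psi u v, alpha \in missing T q e psi u & alpha \in missing T q e psi v] in
  (1 <= s -> x1 \in ys) /\
  [\/ P = [:: x] /\ happy_alpha (shift_fan T phi x ys) x (nth x ys k.-1),
      s < l /\ happy_alpha (shift_fan T (flip_path T phi P alpha beta) x (take j ys))
                           x (nth x ys j.-1),
      s < l /\ happy_alpha (shift_fan T (flip_path T phi P alpha beta) x ys)
                           x (nth x ys k.-1)
    | s = l].
Proof.
move=> [e_sym e_irr] pr exy pxy _ [j0 [mf chain]] k s x1 j beta happy_alpha.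
have [fF a_last [[j0E a_x] | [j0_lt pj0]]] := make_fan_spec exy pxy mf;
  have [ys_ne ys_uniq ys_adj _ _] := fF.
  move: chain; rewrite j0E eqxx => PE; split; first by rewrite /s PE.
  by apply: Or41; rewrite /k nth_last; split=> //; apply: happy_shift_fan.
move: chain; rewrite (ltn_eqF j0_lt) => -[has_beta [Pm [hd [maxP PE]]]].
have /andP[b_x _] := minc_sat has_beta.
have exw : e x (nth x ys j0) by apply/(allP ys_adj)/mem_nth.
have [P' PmE x1w] := maximal_ab_path_start e_irr pr maxP hd exw pj0.
have P'_ne : P' != [::].
  by apply: contraTneq (edge_neq e_irr exw) => P'0; rewrite -x1w P'0 /= eqxx.
have PE' : P = take l.+1 (x :: P').
  by rewrite PE PmE; case: leqP => // P'_le; rewrite take_oversize.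
have s_def : s = minn l (size P').
  by rewrite /s /path_length PE' size_take_min /= minnSS.
split.
  rewrite s_def leq_min => /andP[l_ge1 _].
  by rewrite /x1 PE' nth_take //= x1w mem_nth.
have [P'_lt | l_le] := ltnP (size P') l; last first.
  by apply: Or44; rewrite s_def; apply/minn_idPl.
have PE'' : P = x :: P' by rewrite PE' take_oversize //= ltnS ltnW.
have s_lt : s < l by rewrite s_def (minn_idPr (ltnW P'_lt)).
have jE : j = j0 by rewrite /j /x1 PE'' /= x1w index_uniq.
have abP : ab_path e phi alpha beta (x :: P') by case: maxP; rewrite PmE.
have := flip_shift_fan_happy e_sym e_irr pr fF a_last j0_lt pj0 b_x abP P'_ne.
by rewrite jE /k nth_last PE'' => -[happy_take | happy_full]; [apply: Or42 | apply: Or43].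
Qed.
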